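(* Let $q,t\in\mathbb N$ and let $M$ be a multigraph (without loops) with $V(M)=[t]$ and maximum degree at most $qt$. Then there is an $M$-linkage $Q=(P_{uv})_{uv\in E(M)}$ in the complete graph $K_t$ on $[t]$ such that every edge of $K_t$ lies on at most $18q$ of the paths in $Q$.
   Context: For a graph $H$ and a multigraph $M$ with $V(M)\subseteq V(H)$, an $M$-linkage in $H$ is a family of paths $(P_e)_{e\in E(M)}$ in $H$ (one per edge of $M$, counting multiplicity) such that $P_e$ has the two endpoints of $e$ as its endpoints. Degrees in multigraphs count multiplicities. *)

From mathcomp Require Import all_boot.
Set Implicit Arguments. Unset Strict Implicit. Unset Printing Implicit Defensive.

(* A loopless multigraph on vertex set [t] = 'I_t is given by the sequence of
   its edges (an edge {u,v} of multiplicity m appears m times, in either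
   orientation). *)
Definition loopless (t : nat) (E : seq ('I_t * 'I_t)) : bool :=
  all (fun e => e.1 != e.2) E.

Definition mdeg (t : nat) (E : seq ('I_t * 'I_t)) (v : 'I_t) : nat :=
  count (fun e => (e.1 == v) || (e.2 == v)) E.

(* p is a path in the complete graph K_t from u to v: a duplicate-free
   vertex sequence starting at u and ending at v (consecutive vertices are
   distinct, hence adjacent in K_t). *)
Definition Kt_path (t : nat) (u v : 'I_t) (p : seq 'I_t) : bool :=
  [&& head u p == u, last u p == v, p != [::] & uniq p].

Definition on_path (t : nat) (a b : 'I_t) (p : seq 'I_t) : bool :=
  has (fun xy => (xy == (a, b)) || (xy == (b, a))) (zip p (behead p)).

Definition linkage (t : nat) (E : seq ('I_t * 'I_t)) (P : seq (seq 'I_t)) : bool :=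
  all2 (fun e p => Kt_path e.1 e.2 p) E P.

(* If q t <= 18 q, every edge of M is routed along itself, and an edge {a, b}
   of K_t carries at most deg a <= q t <= 18 q paths.  Otherwise q > 0 and
   t > 18, and the edges uv of M are routed one at a time along paths u w v,
   the middle vertex w being chosen greedily.  Every vertex x ends at most q t
   paths and is the middle of at most q t of them, so the edges of K_t at x
   carry at most 3 q t path edges; hence, for each end x of the new edge, at
   most t/6 edges {x, y} are saturated (carry 18 q paths).  As M has at most
   q t^2/2 edges, at most t/2 vertices are already the middle of q t paths.
   This excludes at most t/6 + t/6 + t/2 + 2 < t candidates for w. *)

From mathcomp Require Import all_boot zify.

Set Implicit Arguments. Unset Strict Implicit. Unset Printing Implicit Defensive.

Lemma orb_eq_addn (T : eqType) (a b v : T) :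
  a != b -> ((a == v) || (b == v) : nat) = (a == v) + (b == v).
Proof. by move=> ab; case: eqP => [<-|//]; rewrite eq_sym (negbTE ab). Qed.

Section Counting.
Variable T : finType.

Lemma sum_indicator1 (c : T) : \sum_(x : T) (c == x) = 1.
Proof. by rewrite (bigD1 c) //= eqxx big1 // => x; rewrite eq_sym => /negbTE ->. Qed.

Lemma sum_count_mem (s : seq T) : \sum_(x : T) count_mem x s = size s.
Proof.
elim: s => [|y s IHs]; first by rewrite big1.
by rewrite big_split /= sum_indicator1 IHs.
Qed.

Lemma markov_card (f : T -> nat) (L : nat) :
  L * #|[set x | L <= f x]| <= \sum_x f x.
Proof.
rewrite mulnC -sum_nat_const [X in _ <= X](bigID (mem [set x | L <= f x])) /=.
by apply: leq_trans (leq_addr _ _); apply: leq_sum => x; rewrite inE.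
Qed.

Lemma sum_pair_eq (a b u : T) : \sum_(x : T) ((a, b) == (u, x)) = (a == u).
Proof.
under eq_bigr do rewrite xpair_eqE -mulnb.
by rewrite -big_distrr /= sum_indicator1 muln1.
Qed.

End Counting.

Lemma on_pathC (t : nat) (a b : 'I_t) : on_path a b =1 on_path b a.
Proof. by move=> p; apply: eq_has => xy; rewrite orbC. Qed.

Lemma sum_on_path (t : nat) (u : 'I_t) (p : seq 'I_t) :
  \sum_x on_path u x p <= \sum_(xy <- zip p (behead p)) ((xy.1 == u) + (xy.2 == u)).
Proof.
rewrite /on_path; elim: (zip _ _) => [|[a b] s IHs]; first by rewrite big_nil big1.
rewrite big_cons /= -(sum_pair_eq a b u) -(sum_pair_eq b a u) -big_split /=.
apply: leq_trans (leq_add (leqnn _) IHs); rewrite -big_split /=; apply: leq_sum => x _.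
rewrite !xpair_eqE.
by case: (_ == _); case: (_ == _); case: (_ == _); case: (_ == _); case: has.
Qed.

Lemma sum_mdeg (t : nat) (E : seq ('I_t * 'I_t)) :
  loopless E -> \sum_v mdeg E v = 2 * size E.
Proof.
elim: E => [|e E IHE] /=; first by rewrite big1.
move=> /andP[ne /IHE IH]; rewrite big_split /= IH.
under eq_bigr do rewrite orb_eq_addn //.
by rewrite big_split /= !sum_indicator1 mulnS.
Qed.

Lemma linkage_edges (t : nat) (E : seq ('I_t * 'I_t)) :
  loopless E -> linkage E [seq [:: e.1; e.2] | e <- E].
Proof.
elim: E => [|e E IHE] //= /andP[ne /IHE ->].
by rewrite andbT /Kt_path /= !eqxx inE ne.
Qed.

Lemma count_on_path_edges (t : nat) (E : seq ('I_t * 'I_t)) (a b : 'I_t) :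
  count (on_path a b) [seq [:: e.1; e.2] | e <- E] <= mdeg E a.
Proof.
rewrite count_map; apply: sub_count => -[x y]; rewrite /on_path /= orbF !xpair_eqE.
by case/orP => /andP[/eqP -> /eqP ->]; rewrite eqxx ?orbT.
Qed.

Definition detours (t : nat) (E : seq ('I_t * 'I_t)) (W : seq 'I_t) : seq (seq 'I_t) :=
  [seq [:: ew.1.1; ew.2; ew.1.2] | ew <- zip E W].

Definition avoiding (t : nat) (E : seq ('I_t * 'I_t)) (W : seq 'I_t) : bool :=
  all2 (fun e w => (w != e.1) && (w != e.2)) E W.

Lemma linkage_detours (t : nat) (E : seq ('I_t * 'I_t)) (W : seq 'I_t) :
  loopless E -> avoiding E W -> linkage E (detours E W).
Proof.
elim: E W => [|e E IHE] [|w W] //= /andP[ne loopE] /andP[/andP[w1 w2] aW].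
rewrite IHE // andbT /Kt_path /= eqxx !inE !negb_or ne w2 andbT /=.
by rewrite eqxx eq_sym w1.
Qed.

Lemma sum_on_path_detours (t : nat) (E : seq ('I_t * 'I_t)) (W : seq 'I_t) (u : 'I_t) :
  loopless E -> \sum_x count (on_path u x) (detours E W) <= mdeg E u + 2 * count_mem u W.
Proof.
elim: E W => [|e E IHE] [|w W] /=; try by rewrite big1.
move=> /andP[ne /(IHE W) IH]; rewrite big_split /=.
apply: leq_trans (leq_add (sum_on_path u [:: e.1; w; e.2]) IH) _.
rewrite !big_cons big_nil /mdeg /= orb_eq_addn //; set c := count _ W; lia.
Qed.

Lemma exists_light_vertex (q t : nat) (u v : 'I_t) (f g h : 'I_t -> nat) :
  0 < q -> 12 < t ->
  \sum_x f x <= 3 * (q * t) -> \sum_x g x <= 3 * (q * t) ->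
  2 * \sum_x h x <= t * (q * t) ->
  exists w, [/\ w != u, w != v, f w < 18 * q, g w < 18 * q & h w < q * t].
Proof.
move=> q_gt0 t_gt12 sum_f sum_g sum_h.
set F := [set x | 18 * q <= f x]; set G := [set x | 18 * q <= g x].
set H := [set x | q * t <= h x].
have card_F : 6 * #|F| <= t by have := markov_card f (18 * q); rewrite -/F; nia.
have card_G : 6 * #|G| <= t by have := markov_card g (18 * q); rewrite -/G; nia.
have card_H : 2 * #|H| <= t by have := markov_card h (q * t); rewrite -/H; nia.
have card_uv : #|[set u; v]| <= 2 by rewrite cards2; case: (u != v).
have : 0 < #|~: (F :|: G :|: H :|: [set u; v])|.
  have := cardsC (F :|: G :|: H :|: [set u; v]); rewrite card_ord.
  have := (leq_card_setU (F :|: G :|: H) [set u; v]).1.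
  have := (leq_card_setU (F :|: G) H).1; have := (leq_card_setU F G).1; lia.
rewrite card_gt0 => /set0Pn[w].
rewrite !inE !negb_or -!ltnNge => /andP[/andP[/andP[fw gw] hw] /andP[wu wv]].
by exists w.
Qed.

Lemma greedy_detours (q t : nat) (E : seq ('I_t * 'I_t)) :
  0 < q -> 12 < t -> loopless E -> (forall v, mdeg E v <= q * t) ->
  exists W, [/\ avoiding E W,
    forall a b, count (on_path a b) (detours E W) <= 18 * q &
    forall w, count_mem w W <= q * t].
Proof.
move=> q_gt0 t_gt12; elim: E => [|[u v] E IHE] /=; first by exists [::].
move=> /andP[_ loopE] deg.
have degE x : mdeg E x <= q * t by apply: leq_trans (deg x); apply: leq_addl.
have [W [aW load mid]] := IHE loopE degE.
set P := detours E W.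
have vertex_load x : \sum_y count (on_path x y) P <= 3 * (q * t).
  apply: leq_trans (sum_on_path_detours W x loopE) _.
  by have := degE x; have := mid x; set c := count _ W; lia.
have mid_total : 2 * \sum_x count_mem x W <= t * (q * t).
  have size_W : size E = size W by move: aW; rewrite /avoiding all2E => /andP[/eqP].
  rewrite sum_count_mem -size_W -sum_mdeg //.
  by rewrite -[t in t * _]card_ord -sum_nat_const leq_sum.
have [w [wu wv uw vw mw]] :=
  exists_light_vertex u v q_gt0 t_gt12 (vertex_load u) (vertex_load v) mid_total.
exists (w :: W); split.
- by rewrite /avoiding /= wu wv; exact: aW.
- move=> a b /=.
  have [onP|_] := boolP (on_path a b [:: u; w; v]); last by rewrite load.
  rewrite /on_path /= orbF !xpair_eqE -!orbA in onP.
  by case/or4P: onP => /andP[/eqP <- /eqP <-]; rewrite add1n -/P // (eq_count (on_pathC _ _)).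
- by move=> x /=; case: eqP => [<-|_]; [exact: mw | exact: mid].
Qed.

Theorem mainTheorem16 (q t : nat) (E : seq ('I_t * 'I_t)) :
  loopless E ->
  (forall v : 'I_t, mdeg E v <= q * t) ->
  exists P : seq (seq 'I_t),
    linkage E P /\
    (forall a b : 'I_t, a != b -> count (on_path a b) P <= 18 * q).
Proof.
move=> loopE deg; have [small | large] := leqP (q * t) (18 * q).
  exists [seq [:: e.1; e.2] | e <- E]; split; first exact: linkage_edges.
  by move=> a b _; apply: leq_trans (count_on_path_edges E a b) (leq_trans (deg a) small).
have q_gt0 : 0 < q by rewrite lt0n; apply: contraTneq large => ->; rewrite !mul0n.
have t_gt12 : 12 < t by move: large; rewrite mulnC ltn_pmul2l //; lia.
have [W [aW load _]] := greedy_detours q_gt0 t_gt12 loopE deg.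
by exists (detours E W); split=> [|a b _]; [exact: linkage_detours | exact: load].
Qed.
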